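(* Fix integers $N\geq 1$ and $r\geq 0$. Let $d=(d_0,d_1,\dots,d_N)\in\mathbb Z^{N+1}$ be a degree sequence (i.e. $d_{j+1}>d_j$ for all $j$) with $d_0=0$ and $d_N\leq N+r$. For $0\leq i\leq N$ define \[ \beta_i(\pi_d):=\frac{\prod_{j\neq 0} d_j}{\prod_{i'\neq i}|d_i-d_{i'}|}, \] where the products run over $j\in\{1,\dots,N\}$ and $i'\in\{0,\dots,N\}\setminus\{i\}$. Then for every $0\leq i\leq N$, \[ \binom{N}{i}\cdot N^{-r}\;\leq\;\beta_i(\pi_d)\;\leq\;\binom{N}{i}\cdot N^{r}. \]
   Context: The numbers $\beta_i(\pi_d)$ are the nonzero entries $\beta_{i,d_i}$ of the pure diagram $\pi_d$ of type $d$ (normalized so that $\beta_0(\pi_d)=1$), a Betti table whose only nonzero entry in homological degree $i$ is in internal degree $d_i$. *)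

From mathcomp Require Import all_boot all_order all_algebra.
Set Implicit Arguments. Unset Strict Implicit. Unset Printing Implicit Defensive.
Import Order.TTheory GRing.Theory Num.Theory.
Local Open Scope ring_scope.

Definition degree_seq (N : nat) (d : 'I_N.+1 -> int) : Prop :=
  forall j k : 'I_N.+1, (j < k)%N -> d j < d k.

Definition beta_pure (N : nat) (d : 'I_N.+1 -> int) (i : 'I_N.+1) : rat :=
  (\prod_(j < N.+1 | j != ord0) (d j)%:~R) /
  (\prod_(i' < N.+1 | i' != i) (`|d i - d i'|)%:~R).

From mathcomp Require Import all_boot all_order all_algebra.
From mathcomp Require Import zify.
Import Order.TTheory GRing.Theory Num.Theory.
Local Open Scope ring_scope.

(* A degree sequence rises by at least one per step, so j <= d_j <= j + r and
   |d_i - d_j| >= |i - j|.  Cancelling d_i, beta_i is the product over j <> 0, i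
   of d_j / |d_i - d_j|.  Index these factors by k = |i - j| and write
   d_i = i + a with a <= r: each lies between (i -+ k) / (k + c), with c = a below
   i and c = r - a above i, and (a + i -+ k) / k.  Both bounding products factor
   as binomial(N, i) times products prod_(m <= j < n) (c + j) / j, which are at
   most (n / m) ^ c by Bernoulli's inequality, and the resulting powers are at
   most N ^ c. *)

Lemma bernoulli_nat (a k : nat) : ((a + k) * k ^ a <= k * k.+1 ^ a)%N.
Proof.
elim: a => [|a IHa]; first by rewrite expn0 add0n muln1.
have le_exp : (k ^ a <= k.+1 ^ a)%N by case: (a) => // e; rewrite leq_exp2r.
rewrite !expnS; nia.
Qed.

Section PuncturedRange.
Context {R : Type} {idx : R} {op : Monoid.com_law idx}.

Lemma big_nat_rev1 (F : nat -> R) (i : nat) :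
  \big[op/idx]_(1 <= k < i) F (i - k)%N = \big[op/idx]_(1 <= k < i) F k.
Proof. by rewrite big_nat_rev; apply: eq_big_nat => k /andP[_ lt_ki]; congr F; lia. Qed.

Lemma big_punctured (N : nat) (i : 'I_N.+1) (F : nat -> R) :
  \big[op/idx]_(j < N.+1 | (j != ord0) && (j != i)) F j =
  op (\big[op/idx]_(1 <= k < i) F (i - k)%N)
     (\big[op/idx]_(1 <= k < N.+1 - i) F (i + k)%N).
Proof.
rewrite (eq_bigl (fun j : 'I_N.+1 => (0 < j)%N && (j != i :> nat))) => [|j]; last first.
  by rewrite lt0n.
rewrite -(big_mkord (fun j => (0 < j)%N && (j != i))).
rewrite [LHS](big_cat_nat _ (n := i)) ?(ltnW (ltn_ord i)) //=; congr (op _ _).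
  rewrite big_nat_rev1; have [->|i_gt0] := posnP i; first by rewrite !big_geq.
  rewrite big_ltn_cond //= [LHS]big_nat_cond [RHS]big_nat_cond.
  by apply: eq_bigl => j; apply/idP/idP; lia.
rewrite big_ltn_cond //= eqxx andbF -[i.+1]add1n big_addn.
rewrite [LHS]big_nat_cond [RHS]big_nat_cond.
by apply: eq_big => [k|k _]; [apply/idP/idP; lia | rewrite addnC].
Qed.

End PuncturedRange.

Section RatioProducts.
Context {R : numFieldType}.

Lemma prod_addn_div_le (a m n : nat) : (0 < m <= n)%N ->
  \prod_(m <= j < n) ((a + j)%:R / j%:R : R) <= (n%:R / m%:R) ^+ a.
Proof.
case/andP => m_gt0; rewrite leq_eqVlt => /orP[/eqP <-|lt_mn].
  by rewrite big_geq // divff ?expr1n // pnatr_eq0 -lt0n.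
rewrite -(telescope_prodf (f := fun j => j%:R)) => [|k /andP[k_gt _]|//]; last first.
  by rewrite pnatr_eq0 -lt0n (leq_trans m_gt0 (ltnW k_gt)).
rewrite -prodrXl big_seq_cond [X in _ <= X]big_seq_cond.
apply: ler_prod => j /andP[]; rewrite mem_index_iota => /andP[le_mj _] _.
have j_gt0 : (0 < j)%N by apply: leq_trans le_mj.
rewrite divr_ge0 ?ler0n //= expr_div_n ler_pdivrMr ?ltr0n // mulrAC.
rewrite ler_pdivlMr ?exprn_gt0 ?ltr0n // -!natrX -!natrM ler_nat.
by rewrite [X in (_ <= X)%N]mulnC bernoulli_nat.
Qed.

Lemma prod_div_addn_ge (a n : nat) : (0 < n)%N ->
  (n%:R ^+ a)^-1 <= \prod_(1 <= k < n) (k%:R / (a + k)%:R : R).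
Proof.
move=> n_gt0; have := prod_addn_div_le a 1 n n_gt0; rewrite divr1.
have prod_gt0 : 0 < \prod_(1 <= k < n) ((a + k)%:R / k%:R : R).
  rewrite big_seq; apply: prodr_gt0 => k; rewrite mem_index_iota => /andP[k_gt0 _].
  by rewrite divr_gt0 ?ltr0n ?addn_gt0 ?k_gt0 ?orbT.
rewrite -lef_pV2 ?posrE ?exprn_gt0 ?ltr0n // -prodfV.
by under eq_bigr do rewrite invf_div.
Qed.

Lemma prod_binomial (i n : nat) :
  \prod_(1 <= k < n.+1) ((i + k)%:R / k%:R : R) = 'C(i + n, i)%:R.
Proof.
elim: n => [|n IHn]; first by rewrite big_geq // addn0 binn.
have := mul_bin_down (i + n).+1 i; rewrite /= subSn ?leq_addr // addKn => bin_step.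
rewrite big_nat_recr //= IHn addnS mulrA -natrM mulnC bin_step natrM mulrAC.
by rewrite divff ?mul1r ?pnatr_eq0.
Qed.

Lemma binomial_punctured (N i : nat) : (i <= N)%N ->
  \prod_(1 <= k < i) ((i - k)%:R / k%:R : R) *
  \prod_(1 <= k < N.+1 - i) ((i + k)%:R / k%:R) = 'C(N, i)%:R.
Proof.
move=> le_iN; rewrite prodf_div (big_nat_rev1 (fun k => k%:R)) -prodf_div.
rewrite big_nat_cond big1 => [|k /andP[/andP[k_gt0 _] _]]; last first.
  by rewrite divff // pnatr_eq0 -lt0n.
by rewrite mul1r subSn // prod_binomial subnKC.
Qed.

Lemma punctured_prod_ge (N i a b : nat) : (0 < i <= N)%N ->
  'C(N, i)%:R / N%:R ^+ (a + b) <=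
  \prod_(1 <= k < i) ((i - k)%:R / (k + a)%:R : R) *
  \prod_(1 <= k < N.+1 - i) ((i + k)%:R / (k + b)%:R).
Proof.
case/andP=> i_gt0 le_iN.
have split_ratio c x k : (0 < k)%N -> x / (k + c)%:R = x / k%:R * (k%:R / (c + k)%:R) :> R.
  by move=> k_gt0; rewrite mulrA divfK ?pnatr_eq0 -?lt0n // addnC.
have inv_expn_le c n : (0 < n)%N -> (n <= N)%N -> (N%:R ^+ c)^-1 <= (n%:R ^+ c : R)^-1.
  move=> n_gt0 le_nN; rewrite lef_pV2 ?posrE ?exprn_gt0 ?ltr0n ?(leq_trans n_gt0) //.
  by apply: lerXn2r; rewrite ?nnegrE ?ler0n ?ler_nat.
under [X in _ <= X * _]eq_big_nat => k /andP[k_gt0 _] do rewrite (split_ratio a _ _ k_gt0).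
under [X in _ <= _ * X]eq_big_nat => k /andP[k_gt0 _] do rewrite (split_ratio b _ _ k_gt0).
rewrite [X in _ <= X * _]big_split [X in _ <= _ * X]big_split /= mulrACA.
rewrite binomial_punctured // exprD invfM.
apply: ler_wpM2l => //; apply: ler_pM; rewrite ?invr_ge0 ?exprn_ge0 //.
- exact: le_trans (inv_expn_le a i i_gt0 le_iN) (prod_div_addn_ge a i i_gt0).
- have n_gt0 : (0 < N.+1 - i)%N by rewrite subn_gt0.
  have le_nN : (N.+1 - i <= N)%N by rewrite leq_subLR -add1n leq_add2r.
  exact: le_trans (inv_expn_le b _ n_gt0 le_nN) (prod_div_addn_ge b _ n_gt0).
Qed.

Lemma punctured_prod_le (N i a : nat) : (0 < i <= N)%N ->
  \prod_(1 <= k < i) ((a + (i - k))%:R / k%:R : R) *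
  \prod_(1 <= k < N.+1 - i) ((a + (i + k))%:R / k%:R) <= 'C(N, i)%:R * N%:R ^+ a.
Proof.
case/andP=> i_gt0 le_iN.
have split_ratio x k : (0 < x)%N ->
    (a + x)%:R / k%:R = x%:R / k%:R * ((a + x)%:R / x%:R) :> R.
  by move=> x_gt0; rewrite [RHS]mulrC mulrA divfK // pnatr_eq0 -lt0n.
under [X in X * _ <= _]eq_big_nat => k /andP[_ lt_ki]
  do rewrite (split_ratio (i - k)%N k) ?subn_gt0 //.
under [X in _ * X <= _]eq_big_nat => k _
  do rewrite (split_ratio (i + k)%N k) ?addn_gt0 ?i_gt0 //.
rewrite [X in X * _ <= _]big_split [X in _ * X <= _]big_split /= mulrACA.
rewrite binomial_punctured // ler_wpM2l //.
rewrite (big_nat_rev1 (fun x => (a + x)%:R / x%:R)).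
have -> : \prod_(1 <= k < N.+1 - i) ((a + (i + k))%:R / (i + k)%:R : R) =
          \prod_(i.+1 <= j < N.+1) ((a + j)%:R / j%:R).
  by rewrite -[i.+1]add1n big_addn; apply: eq_bigr => k _; rewrite (addnC k).
have ratio_ge0 m n : 0 <= \prod_(m <= j < n) ((a + j)%:R / j%:R : R).
  by apply: prodr_ge0 => j _; rewrite divr_ge0.
apply: le_trans (ler_pM (ratio_ge0 _ _) (ratio_ge0 _ _)
  (prod_addn_div_le a 1 i i_gt0) (prod_addn_div_le a i.+1 N.+1 le_iN)) _.
rewrite divr1 -exprMn; apply: lerXn2r; rewrite ?nnegrE ?mulr_ge0 ?divr_ge0 ?invr_ge0 //.
rewrite mulrA ler_pdivrMr ?ltr0n // -!natrM ler_nat; nia.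
Qed.

Lemma ler_prod_nat (m n : nat) (E1 E2 : nat -> R) :
    (forall k, (m <= k < n)%N -> 0 <= E1 k <= E2 k) ->
  \prod_(m <= k < n) E1 k <= \prod_(m <= k < n) E2 k.
Proof.
move=> E12; rewrite big_nat_cond [X in _ <= X]big_nat_cond.
by apply: ler_prod => k; rewrite andbT; apply: E12.
Qed.

Lemma ler_div_intr (p q s t : int) : 0 < q -> 0 < t ->
  p * t <= s * q -> p%:~R / q%:~R <= s%:~R / t%:~R :> R.
Proof.
move=> q_gt0 t_gt0 cross.
by rewrite ler_pdivrMr ?ltr0z // mulrAC ler_pdivlMr ?ltr0z // -!intrM ler_int.
Qed.

End RatioProducts.

(* Indexed by nat for the reindexing by distance to i; it is only evaluated at
   n <= N, where inord n = n. *)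
Definition beta_factor {N : nat} (d : 'I_N.+1 -> int) (i : 'I_N.+1) (n : nat) : rat :=
  (d (inord n))%:~R / (`|d i - d (inord n)|)%:~R.

Section DegreeSequence.
Context {N r : nat} {d : 'I_N.+1 -> int}.
Hypothesis d_incr : degree_seq d.

Lemma degree_seq_gap {j k : 'I_N.+1} : (j <= k)%N -> k%:Z - j%:Z <= d k - d j.
Proof.
pose f n := d (inord n) - n%:Z.
have f_homo : {in [pred n | (n <= N)%N] &, {homo f : m n / (m <= n)%N >-> m <= n}}.
  apply: homo_leq_in => [//|y x z|m n /[!inE] _ nN p /andP[_ lt_pn]|n /[!inE] _ n1N].
  - exact: le_trans.
  - by rewrite inE (leq_trans (ltnW lt_pn) nN).
  have := d_incr (inord n) (inord n.+1); rewrite !inordK //; last exact: ltnW.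
  by rewrite /f => /(_ (ltnSn n)); lia.
move=> le_jk; have := f_homo j k (leq_ord j) (leq_ord k) le_jk.
by rewrite /f !inord_val; lia.
Qed.

Hypothesis d0 : d ord0 = 0.

Lemma degree_seq_ge (j : 'I_N.+1) : j%:Z <= d j.
Proof. by have := @degree_seq_gap ord0 j (leq0n j); rewrite d0 /=; lia. Qed.

Lemma degree_seq_gt0 (j : 'I_N.+1) : j != ord0 -> 0 < d j.
Proof. by move=> j_neq0; rewrite -d0; apply: d_incr; rewrite lt0n. Qed.

Lemma degree_seq_offset (i : 'I_N.+1) : exists a : nat, d i = (i + a)%:Z.
Proof. by have := degree_seq_ge i; exists (absz (d i - i%:Z)); lia. Qed.

Lemma beta_pureE (i : 'I_N.+1) :
  beta_pure d i = \prod_(j < N.+1 | (j != ord0) && (j != i)) beta_factor d i j.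
Proof.
under eq_bigr do rewrite /beta_factor inord_val.
rewrite prodf_div /beta_pure; have [->|i_neq0] := eqVneq i ord0.
  by congr (_ / _); apply: eq_bigl => j; rewrite andbb.
rewrite (bigD1 i) // [X in _ / X](bigD1 ord0) 1?eq_sym //= d0 subr0.
rewrite gtr0_norm ?degree_seq_gt0 //.
rewrite invfM mulrACA divff ?mul1r ?intr_eq0 ?gt_eqF ?degree_seq_gt0 //.
by congr (_ / _); apply: eq_bigl => j; rewrite andbC.
Qed.

Lemma beta_pure_ord0 : beta_pure d ord0 = 1.
Proof.
rewrite beta_pureE big1 // => j /andP[j_neq0 _].
rewrite /beta_factor inord_val d0 sub0r normrN gtr0_norm ?degree_seq_gt0 //.
by rewrite divff // intr_eq0 gt_eqF ?degree_seq_gt0.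
Qed.

Lemma beta_factor_ge0 (i : 'I_N.+1) (n : nat) : 0 <= beta_factor d i n.
Proof. by rewrite divr_ge0 ?ler0z ?(le_trans _ (degree_seq_ge _)). Qed.

Hypothesis dN : d ord_max <= (N + r)%:Z.

Lemma degree_seq_le (j : 'I_N.+1) : d j <= j%:Z + r%:Z.
Proof. by have := @degree_seq_gap j ord_max (leq_ord j) => /=; lia. Qed.

Context {i : 'I_N.+1} {a : nat}.
Hypothesis d_i : d i = (i + a)%:Z.

Lemma degree_seq_offset_le : (a <= r)%N.
Proof. by have := degree_seq_le i; rewrite d_i; lia. Qed.

Lemma beta_factor_below (k : nat) : (0 < k < i)%N ->
  (i - k)%:R / (k + a)%:R <= beta_factor d i (i - k) <= (a + (i - k))%:R / k%:R.
Proof.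
case/andP=> k_gt0 lt_ki; rewrite /beta_factor; set j : 'I_N.+1 := inord (i - k).
have j_val : j = (i - k)%N :> nat by rewrite inordK //; have := ltn_ord i; lia.
have le_ji : (j <= i)%N by rewrite j_val leq_subr.
have := degree_seq_ge j; have := degree_seq_gap le_ji.
rewrite j_val d_i => gap_ji d_j_ge.
rewrite gtr0_norm; last by lia.
rewrite !pmulrn; apply/andP; split; apply: ler_div_intr; nia.
Qed.

Lemma beta_factor_above (k : nat) : (0 < k < N.+1 - i)%N ->
  (i + k)%:R / (k + (r - a))%:R <= beta_factor d i (i + k) <= (a + (i + k))%:R / k%:R.
Proof.
case/andP=> k_gt0 lt_kNi; rewrite /beta_factor; set j : 'I_N.+1 := inord (i + k).
have j_val : j = (i + k)%N :> nat by rewrite inordK //; lia.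
have le_ij : (i <= j)%N by rewrite j_val leq_addr.
have := degree_seq_le i; have := degree_seq_le j; have := degree_seq_gap le_ij.
rewrite j_val d_i => gap_ij d_j_le a_le_r.
rewrite ltr0_norm ?opprB; last by lia.
by rewrite !pmulrn; apply/andP; split; apply: ler_div_intr; nia.
Qed.

Lemma beta_pure_ge : (0 < i)%N -> 'C(N, i)%:R / N%:R ^+ r <= beta_pure d i.
Proof.
move=> i_gt0; have iP : (0 < i <= N)%N by rewrite i_gt0 -ltnS ltn_ord.
rewrite beta_pureE big_punctured -(subnKC degree_seq_offset_le).
apply: le_trans (punctured_prod_ge _ _ _ _ iP) _; apply: ler_pM.
- by apply: prodr_ge0 => k _; rewrite divr_ge0.
- by apply: prodr_ge0 => k _; rewrite divr_ge0.
- apply: ler_prod_nat => k kP; have /andP[lo _] := beta_factor_below _ kP.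
  by rewrite lo divr_ge0.
- apply: ler_prod_nat => k kP; have /andP[lo _] := beta_factor_above _ kP.
  by rewrite lo divr_ge0.
Qed.

Lemma beta_pure_le : (0 < i)%N -> beta_pure d i <= 'C(N, i)%:R * N%:R ^+ r.
Proof.
move=> i_gt0; have iP : (0 < i <= N)%N by rewrite i_gt0 -ltnS ltn_ord.
rewrite beta_pureE big_punctured.
apply: (@le_trans _ _ ('C(N, i)%:R * N%:R ^+ a)); last first.
  by rewrite ler_wpM2l // (ler_weXn2l _ degree_seq_offset_le) // ler1n; lia.
apply: le_trans (punctured_prod_le _ _ a iP); apply: ler_pM.
- by apply: prodr_ge0 => k _; rewrite beta_factor_ge0.
- by apply: prodr_ge0 => k _; rewrite beta_factor_ge0.
- apply: ler_prod_nat => k kP; have /andP[_ hi] := beta_factor_below _ kP.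
  by rewrite hi beta_factor_ge0.
- apply: ler_prod_nat => k kP; have /andP[_ hi] := beta_factor_above _ kP.
  by rewrite hi beta_factor_ge0.
Qed.

End DegreeSequence.

Theorem lemma3p1 (N r : nat) (d : 'I_N.+1 -> int) :
  (1 <= N)%N ->
  degree_seq d ->
  d ord0 = 0 ->
  d ord_max <= (N + r)%:Z ->
  forall i : 'I_N.+1,
    ('C(N, i))%:R / (N%:R ^+ r) <= beta_pure d i :> rat /\
    beta_pure d i <= ('C(N, i))%:R * (N%:R ^+ r) :> rat.
Proof.
move=> N_gt0 d_incr d0 dN i.
have [i0 | i_gt0] := posnP i.
  have -> : i = ord0 by apply: val_inj.
  have N_ge1 : 1 <= N%:R ^+ r :> rat by rewrite exprn_ege1 ?ler1n.
  by rewrite beta_pure_ord0 // bin0 mulr1n !mul1r invf_le1 ?(lt_le_trans ltr01).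
have [a d_i] := degree_seq_offset d_incr d0 i.
by split; [apply: beta_pure_ge d_i i_gt0 | apply: beta_pure_le d_i i_gt0].
Qed.
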